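(* Consider a mean-variance team stochastic game as described in the context, with trade-off parameter $\beta\ge 0$. For any two joint policies $\boldsymbol{\mu},\boldsymbol{\mu}'\in\mathcal{U}$, $$J(\boldsymbol{\mu}')-J(\boldsymbol{\mu})=\mathbb{E}_{s\sim\pi^{\boldsymbol{\mu}'},\,\boldsymbol{a}\sim\boldsymbol{\mu}'(\cdot|s)}\big[A_f^{\boldsymbol{\mu}}(s,\boldsymbol{a})\big]+\beta\big(\eta^{\boldsymbol{\mu}'}-\eta^{\boldsymbol{\mu}}\big)^2 .$$
   Context: A team stochastic game consists of a finite set of agents $\mathcal{N}=\{1,\dots,N\}$, a finite state space $\mathcal{S}$, finite action sets $\mathcal{A}_i$ ($i\in\mathcal{N}$) with joint action set $\mathcal{A}=\prod_{i}\mathcal{A}_i$, a transition kernel $P(s'|s,\boldsymbol{a})$ and a common reward function $r:\mathcal{S}\times\mathcal{A}\to\mathbb{R}$. A stationary policy of agent $i$ is a map $\mu_i:\mathcal{S}\to\Delta(\mathcal{A}_i)$; $\mathcal{U}_i$ is the set of such policies. A joint policy $\boldsymbol{\mu}=(\mu_1,\dots,\mu_N)\in\mathcal{U}=\prod_i\mathcal{U}_i$ chooses $\boldsymbol{a}=(a_1,\dots,a_N)$ in state $s$ with probability $\boldsymbol{\mu}(\boldsymbol{a}|s)=\prod_i\mu_i(a_i|s)$, inducing the Markov chain $P^{\boldsymbol{\mu}}(s'|s)=\sum_{\boldsymbol{a}}\boldsymbol{\mu}(\boldsymbol{a}|s)P(s'|s,\boldsymbol{a})$. Standing assumption: for every $\boldsymbol{\mu}\in\mathcal{U}$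 this chain is ergodic, with stationary distribution $\pi^{\boldsymbol{\mu}}$ (so $\pi^{\boldsymbol{\mu}}(s)>0$ for all $s$). Long-run average reward: $\eta^{\boldsymbol{\mu}}=\sum_s\pi^{\boldsymbol{\mu}}(s)\sum_{\boldsymbol{a}}\boldsymbol{\mu}(\boldsymbol{a}|s)r(s,\boldsymbol{a})$; long-run variance: $\zeta^{\boldsymbol{\mu}}=\sum_s\pi^{\boldsymbol{\mu}}(s)\sum_{\boldsymbol{a}}\boldsymbol{\mu}(\boldsymbol{a}|s)(r(s,\boldsymbol{a})-\eta^{\boldsymbol{\mu}})^2$ (equal to $\lim_{T\to\infty}\frac1T\mathbb{E}_{\boldsymbol{\mu}}\sum_{t<T}(r(s_t,\boldsymbol{a}_t)-\eta^{\boldsymbol{\mu}})^2$). For fixed $\beta\ge0$ the mean-variance performance is $J(\boldsymbol{\mu})=J^{\boldsymbol{\mu}}=\eta^{\boldsymbol{\mu}}-\beta\zeta^{\boldsymbol{\mu}}$. Surrogate reward: $f^{\boldsymbol{\mu}}(s,\boldsymbol{a})=r(s,\boldsymbol{a})-\beta(r(s,\boldsymbol{a})-\eta^{\boldsymbol{\mu}})^2$, $f^{\boldsymbol{\mu}}(s)=\sum_{\boldsymbol{a}}\boldsymbol{\mu}(\boldsymbol{a}|s)f^{\boldsymbol{\mu}}(s,\boldsymbol{a})$. The value function $V_f^{\boldsymbol{\mu}}$ is a solution of the Poisson equation $V(s)=f^{\boldsymbol{\mu}}(s)-J^{\boldsymbol{\mu}}+\sum_{s'}P^{\boldsymbol{\mu}}(s'|s)V(s')$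 for all $s$ (formally $V_f^{\boldsymbol{\mu}}(s)=\mathbb{E}_{\boldsymbol{\mu}}[\sum_{t\ge0}(f^{\boldsymbol{\mu}}(s_t,\boldsymbol{a}_t)-J^{\boldsymbol{\mu}})\mid s_0=s]$; it is unique up to an additive constant, which does not affect $A_f^{\boldsymbol{\mu}}$). Action-value function: $Q_f^{\boldsymbol{\mu}}(s,\boldsymbol{a})=f^{\boldsymbol{\mu}}(s,\boldsymbol{a})-J^{\boldsymbol{\mu}}+\sum_{s'}P(s'|s,\boldsymbol{a})V_f^{\boldsymbol{\mu}}(s')$; advantage function: $A_f^{\boldsymbol{\mu}}(s,\boldsymbol{a})=Q_f^{\boldsymbol{\mu}}(s,\boldsymbol{a})-V_f^{\boldsymbol{\mu}}(s)$. *)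

From mathcomp Require Import all_boot all_order all_algebra.
Set Implicit Arguments. Unset Strict Implicit. Unset Printing Implicit Defensive.
Import Order.TTheory GRing.Theory Num.Theory.
Local Open Scope ring_scope.

Section TeamGame.
Variable R : realFieldType.
Variable N : nat.
Variable S : finType.
Variable A : 'I_N -> finType.

Definition jact := {dffun forall i : 'I_N, A i}.

(* stationary policies of the agents, given as a family mu i s a = mu_i(a|s) *)
Definition policy := forall i : 'I_N, S -> A i -> R.

Definition is_policy (mu : policy) : Prop :=
  (forall i s a, 0 <= mu i s a) /\ (forall i s, \sum_(a : A i) mu i s a = 1).

Definition jprob (mu : policy) (s : S) (a : jact) : R := \prod_(i < N) mu i s (a i).

(* transition kernel P(s'|s,a) := P s a s' *)
Definition is_kernel (P : S -> jact -> S -> R) : Prop :=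
  (forall s a s', 0 <= P s a s') /\ (forall s a, \sum_(s' : S) P s a s' = 1).

(* induced Markov chain P^mu(s'|s) := Pmu P mu s s' *)
Definition Pmu (P : S -> jact -> S -> R) (mu : policy) (s s' : S) : R :=
  \sum_(a : jact) jprob mu s a * P s a s'.

Fixpoint npow (Q : S -> S -> R) (n : nat) : S -> S -> R :=
  match n with
  | 0 => fun s s' => if s == s' then 1 else 0
  | n'.+1 => fun s s' => \sum_(t : S) npow Q n' s t * Q t s'
  end.

(* ergodic (irreducible and aperiodic) finite chain, i.e. regular:
   some power of the transition matrix is entrywise positive *)
Definition ergodic (Q : S -> S -> R) : Prop :=
  exists n, forall s s', 0 < npow Q n s s'.

Definition stationary (Q : S -> S -> R) (pi : S -> R) : Prop :=
  (forall s, 0 <= pi s) /\ (\sum_(s : S) pi s = 1) /\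
  (forall s', \sum_(s : S) pi s * Q s s' = pi s').

Definition eta (r : S -> jact -> R) (mu : policy) (pi : S -> R) : R :=
  \sum_(s : S) pi s * \sum_(a : jact) jprob mu s a * r s a.

Definition zeta (r : S -> jact -> R) (mu : policy) (pi : S -> R) : R :=
  \sum_(s : S) pi s * \sum_(a : jact) jprob mu s a * (r s a - eta r mu pi) ^+ 2.

Definition Jmv (beta : R) (r : S -> jact -> R) (mu : policy) (pi : S -> R) : R :=
  eta r mu pi - beta * zeta r mu pi.

Definition fsur (beta : R) (r : S -> jact -> R) (mu : policy) (pi : S -> R)
  (s : S) (a : jact) : R :=
  r s a - beta * (r s a - eta r mu pi) ^+ 2.

Definition fsur_s (beta : R) (r : S -> jact -> R) (mu : policy) (pi : S -> R)
  (s : S) : R :=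
  \sum_(a : jact) jprob mu s a * fsur beta r mu pi s a.

Definition poisson (P : S -> jact -> S -> R) (beta : R) (r : S -> jact -> R)
  (mu : policy) (pi : S -> R) (V : S -> R) : Prop :=
  forall s, V s = fsur_s beta r mu pi s - Jmv beta r mu pi
                  + \sum_(s' : S) Pmu P mu s s' * V s'.

Definition Qf (P : S -> jact -> S -> R) (beta : R) (r : S -> jact -> R)
  (mu : policy) (pi : S -> R) (V : S -> R) (s : S) (a : jact) : R :=
  fsur beta r mu pi s a - Jmv beta r mu pi + \sum_(s' : S) P s a s' * V s'.

Definition Af (P : S -> jact -> S -> R) (beta : R) (r : S -> jact -> R)
  (mu : policy) (pi : S -> R) (V : S -> R) (s : S) (a : jact) : R :=
  Qf P beta r mu pi V s a - V s.

End TeamGame.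

From mathcomp Require Import all_boot all_order all_algebra.
From mathcomp Require Import ring.
Set Implicit Arguments. Unset Strict Implicit. Unset Printing Implicit Defensive.
Import Order.TTheory GRing.Theory Num.Theory.
Local Open Scope ring_scope.

(* Write E'[g] for the mean of g(s, a) under s ~ pi', a ~ mu'(.|s).  Since pi' is
   stationary for the chain of mu', E'[sum_s' P(s'|s,a) V(s')] = E'[V(s)], so the
   V-terms of the advantage cancel and E'[A] = E'[f^mu] - J^mu; this holds for any
   V.  Shifting the square in f^mu = r - beta (r - eta)^2 from eta
   to eta' = E'[r] gives E'[(r - eta)^2] = zeta' + (eta' - eta)^2, hence
   E'[f^mu] = J^mu' - beta (eta' - eta)^2. *)

Lemma bigA_distr_dffun (R : comPzSemiRingType) (I : finType) (T_ : I -> finType)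
    (F : forall i, T_ i -> R) :
  \prod_(i : I) \sum_(x : T_ i) F i x =
  \sum_(a : {dffun forall i : I, T_ i}) \prod_(i : I) F i (a i).
Proof.
pose G i := [ffun x => F i x].
rewrite (reindex (@dffun_of_fprod I T_)); last exact/onW_bij/dffun_of_fprod_bij.
transitivity (\sum_(t : fprod T_) \prod_(i in I) G i (t i)); last first.
  by apply: eq_bigr => t _; apply: eq_bigr => i _; rewrite /dffun_of_fprod !ffunE.
rewrite big_fprod -(bigA_distr_big_dep _ (fun i j => untag 0 (G i) j)).
by apply: eq_bigr => i _; rewrite -(big_tag G); apply: eq_bigr => x _; rewrite ffunE.
Qed.

Lemma sum_jprob (R : realFieldType) (N : nat) (S : finType) (A : 'I_N -> finType)
    (mu : policy R S A) (s : S) :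
  is_policy mu -> \sum_(a : jact A) jprob mu s a = 1.
Proof.
case=> _ mu_sum1; rewrite /jprob -(bigA_distr_dffun (fun i => mu i s)).
by apply: big1 => i _; rewrite mu_sum1.
Qed.

Section StateActionMean.
Variables (R : realFieldType) (S T : finType) (q : S -> R) (p : S -> T -> R).

Definition samean (g : S -> T -> R) : R :=
  \sum_(s : S) q s * \sum_(a : T) p s a * g s a.

Lemma eq_samean g h : (forall s a, g s a = h s a) -> samean g = samean h.
Proof.
move=> eq_gh; apply: eq_bigr => s _; congr (_ * _).
by apply: eq_bigr => a _; rewrite eq_gh.
Qed.

Lemma sameanD g h : samean (fun s a => g s a + h s a) = samean g + samean h.
Proof.
rewrite /samean -big_split /=; apply: eq_bigr => s _.
by rewrite -mulrDr -big_split /=; congr (_ * _); apply: eq_bigr => a _; rewrite mulrDr.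
Qed.

Lemma sameanN g : samean (fun s a => - g s a) = - samean g.
Proof.
rewrite /samean -sumrN; apply: eq_bigr => s _.
by rewrite -mulrN -sumrN; congr (_ * _); apply: eq_bigr => a _; rewrite mulrN.
Qed.

Lemma sameanB g h : samean (fun s a => g s a - h s a) = samean g - samean h.
Proof. by rewrite sameanD sameanN. Qed.

Lemma sameanZ c g : samean (fun s a => c * g s a) = c * samean g.
Proof.
rewrite /samean big_distrr; apply: eq_bigr => s _ /=.
rewrite [RHS]mulrCA [c * _]big_distrr; congr (_ * _); apply: eq_bigr => a _ /=.
by rewrite mulrCA.
Qed.

Lemma samean_kernel (K : S -> T -> S -> R) (v : S -> R) :
  (forall s', \sum_(s : S) q s * \sum_(a : T) p s a * K s a s' = q s') ->
  samean (fun s a => \sum_(s' : S) K s a s' * v s') = \sum_(s : S) q s * v s.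
Proof.
move=> q_inv.
transitivity (\sum_(s : S) \sum_(a : T) \sum_(s' : S) q s * p s a * K s a s' * v s').
  apply: eq_bigr => s _; rewrite big_distrr; apply: eq_bigr => a _ /=.
  by rewrite mulrA big_distrr; apply: eq_bigr => s' _ /=; rewrite !mulrA.
under eq_bigr do rewrite exchange_big /=.
rewrite exchange_big; apply: eq_bigr => s' _ /=; rewrite -q_inv big_distrl.
apply: eq_bigr => s _ /=; rewrite big_distrr big_distrl.
by apply: eq_bigr => a _ /=; rewrite !mulrA.
Qed.

Hypothesis p_sum1 : forall s, \sum_(a : T) p s a = 1.

Lemma samean_state (h : S -> R) : samean (fun s _ => h s) = \sum_(s : S) q s * h s.
Proof. by apply: eq_bigr => s _; rewrite -big_distrl /= p_sum1 mul1r. Qed.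

Hypothesis q_sum1 : \sum_(s : S) q s = 1.

Lemma samean_cst c : samean (fun _ _ => c) = c.
Proof. by rewrite samean_state -big_distrl /= q_sum1 mul1r. Qed.

Lemma samean_sqr_dev g c :
  samean (fun s a => (g s a - c) ^+ 2) =
  samean (fun s a => (g s a - samean g) ^+ 2) + (samean g - c) ^+ 2.
Proof.
set m := samean g.
rewrite (@eq_samean _ (fun s a =>
    (g s a - m) ^+ 2 + (2 * (m - c) * g s a + (c ^+ 2 - m ^+ 2)))); last first.
  by move=> s a; ring.
rewrite sameanD sameanD sameanZ samean_cst -/m; ring.
Qed.

End StateActionMean.

Section PerformanceDifference.
Variables (R : realFieldType) (N : nat) (S : finType) (A : 'I_N -> finType).
Variables (P : S -> jact A -> S -> R) (r : S -> jact A -> R) (beta : R).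
Variables (mu mu' : policy R S A) (pi pi' : S -> R).
Hypotheses (mu'_policy : is_policy mu') (pi'_sum1 : \sum_(s : S) pi' s = 1).

Let jprob_sum1 s := sum_jprob s mu'_policy.

Lemma samean_fsur :
  samean pi' (jprob mu') (fsur beta r mu pi) =
  Jmv beta r mu' pi' - beta * (eta r mu' pi' - eta r mu pi) ^+ 2.
Proof.
have eta_mean : samean pi' (jprob mu') r = eta r mu' pi' by [].
have zeta_mean : samean pi' (jprob mu') (fun s a => (r s a - eta r mu' pi') ^+ 2)
  = zeta r mu' pi' by [].
rewrite /fsur sameanB sameanZ (samean_sqr_dev jprob_sum1 pi'_sum1).
by rewrite eta_mean zeta_mean mulrDr opprD addrA.
Qed.

Lemma samean_Af (V : S -> R) :
  (forall s', \sum_(s : S) pi' s * Pmu P mu' s s' = pi' s') ->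
  samean pi' (jprob mu') (Af P beta r mu pi V) =
  samean pi' (jprob mu') (fsur beta r mu pi) - Jmv beta r mu pi.
Proof.
move=> pi'_inv; rewrite /Af /Qf sameanB sameanD sameanB samean_cst // samean_state //.
by rewrite (samean_kernel V pi'_inv) addrK.
Qed.

End PerformanceDifference.

Theorem lemma1 (R : realFieldType) (N : nat) (S : finType) (A : 'I_N -> finType)
  (P : S -> jact A -> S -> R) (r : S -> jact A -> R) (beta : R)
  (HP : is_kernel P)
  (Herg : forall mu : policy R S A, is_policy mu -> ergodic (Pmu P mu))
  (hbeta : 0 <= beta)
  (mu mu' : policy R S A) (Hmu : is_policy mu) (Hmu' : is_policy mu')
  (pi pi' : S -> R)
  (Hpi : stationary (Pmu P mu) pi) (Hpi' : stationary (Pmu P mu') pi')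
  (V : S -> R) (HV : poisson P beta r mu pi V) :
  Jmv beta r mu' pi' - Jmv beta r mu pi =
    \sum_(s : S) pi' s * \sum_(a : jact A) jprob mu' s a * Af P beta r mu pi V s a
    + beta * (eta r mu' pi' - eta r mu pi) ^+ 2.
Proof.
case: Hpi' => _ [pi'_sum1 pi'_inv].
rewrite -[X in _ = X + _]/(samean pi' (jprob mu') (Af P beta r mu pi V)).
by rewrite samean_Af // samean_fsur // [RHS]addrAC subrK.
Qed.
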